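(* Let $n$ be even and let $N=(P,L)$ be a $6$-net of order $n$ with parallel classes $\Pi_0,\dots,\Pi_5$, and let $\mathcal R$ be a relation on $N$ of type $(\lambda_0,\dots,\lambda_5)$. Put $g_i=\frac n2-\lambda_i$ for $0\le i\le 5$. Then for every binary string $\mathbf b=(b_0,\dots,b_5)$ with an even number of ones, $$t_{\mathbf b}+t_{\bar{\mathbf b}}=\frac{1}{16}n^2+\frac14\sum_{0\le i<j\le 5}(-1)^{b_i+b_j}g_ig_j,$$ where $\bar{\mathbf b}$ is the bitwise complement of $\mathbf b$.
   Context: A $k$-net of order $n$ is a set $P$ of $n^2$ points together with a set $L$ of $kn$ lines (subsets of $P$), each line containing $n$ points and each point lying on $k$ lines, such that $L$ partitions into $k$ parallel classes $\Pi_0,\dots,\Pi_{k-1}$ of $n$ pairwise disjoint lines each, and any two lines from different parallel classes meet in exactly one point. A relation on a net is a set $\mathcal R\subseteq L$ of lines such that every point lies on an even number of lines of $\mathcal R$ (equivalently, the $\mathbb F_2$ incidence vectors of the lines in $\mathcal R$ sum to zero). Its type is $(\lambda_0,\dots,\lambda_{k-1})$ where $\lambda_i=|\mathcal R\cap\Pi_i|$. The type of a point $p$ is the binary string $\mathbf b\in\{0,1\}^k$ with $b_i=1$ iff the line of $\Pi_i$ through $p$ lies in $\mathcal R$; $t_{\mathbf b}$ denotes the number of points of type $\mathbf b$. *)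

From mathcomp Require Import all_boot all_order all_algebra.
Set Implicit Arguments. Unset Strict Implicit. Unset Printing Implicit Defensive.
Import Order.TTheory GRing.Theory Num.Theory.

Definition is_net (k n : nat) (P : finType) (L : {set {set P}})
    (Pi : 'I_k -> {set {set P}}) : Prop :=
  [/\ #|P| = n ^ 2,
      #|L| = k * n,
      (forall l, l \in L -> #|l| = n) &
      (forall p : P, #|[set l in L | p \in l]| = k)] /\
  [/\
      L = \bigcup_(i < k) Pi i,
      (forall i j : 'I_k, i != j -> [disjoint Pi i & Pi j]),
      (forall i, #|Pi i| = n),
      (forall i l1 l2, l1 \in Pi i -> l2 \in Pi i -> l1 != l2 ->
          [disjoint l1 & l2]) &
      (forall i j l1 l2, i != j -> l1 \in Pi i -> l2 \in Pi j ->
          #|l1 :&: l2| = 1)].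

Definition is_relation (P : finType) (L R : {set {set P}}) : Prop :=
  R \subset L /\ forall p : P, ~~ odd #|[set l in R | p \in l]|.

Definition rel_type (k : nat) (P : finType) (Pi : 'I_k -> {set {set P}})
    (R : {set {set P}}) (i : 'I_k) : nat := #|R :&: Pi i|.

Definition point_type (k : nat) (P : finType) (Pi : 'I_k -> {set {set P}})
    (R : {set {set P}}) (p : P) : {ffun 'I_k -> bool} :=
  [ffun i => [exists l in Pi i, (p \in l) && (l \in R)]].

Definition t_count (k : nat) (P : finType) (Pi : 'I_k -> {set {set P}})
    (R : {set {set P}}) (b : {ffun 'I_k -> bool}) : nat :=
  #|[set p : P | point_type Pi R p == b]|.

Definition bcompl (k : nat) (b : {ffun 'I_k -> bool}) : {ffun 'I_k -> bool} :=
  [ffun i => ~~ b i].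

From mathcomp Require Import all_boot all_order all_algebra.
From mathcomp Require Import ring lra.
Import Order.TTheory GRing.Theory Num.Theory.
Local Open Scope ring_scope.

(* Write s_i(p) = (-1)^(b_i(p)) for the signs of the type of a point p.  Since
   types have even weight, the indicator of "type p is b or its complement" is
   (1 + sum_(i<j) (-1)^(b_i+b_j) s_i(p) s_j(p)) / 16.  Summing over p, each
   sum_p s_i(p) s_j(p) factors, because p |-> (line of Pi_i through p, line of
   Pi_j through p) is a bijection onto Pi_i x Pi_j; it equals
   (n - 2 lambda_i)(n - 2 lambda_j) = 4 g_i g_j. *)

Lemma sum_signs (V : pzRingType) (T : finType) (A : {pred T}) (c : pred T) :
  \sum_(x in A) (-1) ^+ c x = #|A|%:R - 2 * #|[set x in A | c x]|%:R :> V.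
Proof.
rewrite (eq_bigr (fun x => 1 - 2 * (c x : nat)%:R)); last first.
  by move=> x _; case: (c x); rewrite /= ?mulr1 ?mulr0 ?subr0 // opprD addNKr.
rewrite sumrB sumr_const -mulr_sumr -natr_sum -sum1dep_card big_mkcondr /=.
by congr (_ - 2 * _%:R); apply: eq_bigr => x _; case: (c x).
Qed.

Section NetLines.

Local Set Implicit Arguments.
Local Unset Strict Implicit.

Variables (k n : nat) (P : finType) (L : {set {set P}}) (Pi : 'I_k -> {set {set P}}).
Hypothesis net : @is_net k n P L Pi.

Lemma class_sub_lines i : Pi i \subset L.
Proof.
by case: net => _ [-> _ _ _ _]; apply/subsetP => l li; apply/bigcupP; exists i.
Qed.

Lemma class_disjoint_lines i l1 l2 p :
  l1 \in Pi i -> l2 \in Pi i -> p \in l1 -> p \in l2 -> l1 = l2.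
Proof.
case: net => _ [_ _ _ par _] l1i l2i pl1 pl2; apply/eqP; apply: contraTT pl2 => l12.
by rewrite (disjointFr (par _ _ _ l1i l2i l12) pl1).
Qed.

Lemma cover_class i : cover (Pi i) = [set: P].
Proof.
case: net => [[cardP _ cardl _] [_ _ cardPi par _]].
have /eqP tri : trivIset (Pi i) by apply/trivIsetP => l1 l2; apply: par.
apply/eqP; rewrite eqEcard subsetT cardsT cardP -tri.
rewrite (eq_bigr (fun=> n)) => [|l /(subsetP (class_sub_lines i))]; last exact: cardl.
by rewrite sum_nat_const cardPi mulnn leqnn.
Qed.

(* The default [set0] is never returned, since every class covers [P]. *)
Definition line_through (i : 'I_k) (p : P) : {set P} :=
  odflt set0 [pick l in Pi i | p \in l].

Lemma line_through_spec i p : line_through i p \in Pi i /\ p \in line_through i p.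
Proof.
rewrite /line_through; case: pickP => [l /andP[li pl] //|no_line].
have /bigcupP[l li pl] : p \in cover (Pi i) by rewrite cover_class inE.
by move: (no_line l); rewrite li pl.
Qed.

Lemma eq_line_through i p l :
  (l == line_through i p) = (l \in Pi i) && (p \in l).
Proof.
have [li pl] := line_through_spec i p.
apply/eqP/andP => [-> //|[l'i pl']]; exact: class_disjoint_lines l'i li pl' pl.
Qed.

Lemma point_typeE R i p : point_type Pi R p i = (line_through i p \in R).
Proof.
have [li pl] := line_through_spec i p; rewrite ffunE.
apply/existsP/idP => [[l /and3P[l'i pl' lR]]|lR]; last by exists (line_through i p); rewrite li pl.
by have /eqP <- : l == line_through i p by rewrite eq_line_through l'i pl'.
Qed.

Lemma line_through_inj p : injective (line_through ^~ p).
Proof.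
move=> i j eq_ij; apply/eqP; apply: contraT => neq_ij.
case: net => _ [_ disj _ _ _].
have [li pl] := line_through_spec i p; have [lj _] := line_through_spec j p.
by rewrite eq_ij in li; rewrite (disjointFr (disj _ _ neq_ij) li) in lj.
Qed.

Lemma card_point_type (R : {set {set P}}) p : R \subset L ->
  #|[set i | point_type Pi R p i]| = #|[set l in R | p \in l]|.
Proof.
move=> RL; rewrite -(card_imset _ (@line_through_inj p)).
apply: eq_card => l; rewrite inE; apply/imsetP/andP => [[i] | [lR pl]].
  by rewrite inE point_typeE => lR ->; split=> //; case: (line_through_spec i p).
have := subsetP RL l lR; case: net => _ [-> _ _ _ _] /bigcupP[i _ li].
have /eqP lpi : l == line_through i p by rewrite eq_line_through li.
by exists i; rewrite // inE point_typeE -lpi.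
Qed.

Lemma sum_line_pairs (V : nmodType) i j (F : {set P} -> {set P} -> V) : i != j ->
  \sum_p F (line_through i p) (line_through j p) =
  \sum_(l in Pi i) \sum_(m in Pi j) F l m.
Proof.
case: net => _ [_ _ _ _ meet] neq_ij.
transitivity (\sum_p \sum_(l in Pi i | p \in l) \sum_(m in Pi j | p \in m) F l m).
  apply: eq_bigr => p _.
  rewrite (big_pred1 (line_through i p)) => [|l]; last by rewrite /= eq_line_through.
  by rewrite (big_pred1 (line_through j p)) => // m; rewrite /= eq_line_through.
transitivity (\sum_(l in Pi i) \sum_(m in Pi j) \sum_(p in l :&: m) F l m); last first.
  by apply: eq_bigr => l li; apply: eq_bigr => m mj; rewrite sumr_const (meet i j).
rewrite (exchange_big_dep (mem (Pi i))) => [|p l _ /andP[] //].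
apply: eq_bigr => l li.
rewrite (exchange_big_dep (mem (Pi j))) => [|p m _ /andP[] //].
apply: eq_bigr => m mj.
by apply: eq_bigl => p; move: li mj; rewrite !inE => -> ->.
Qed.

Lemma sum_class_signs (V : pzRingType) (R : {set {set P}}) i :
  \sum_(l in Pi i) (-1) ^+ (l \in R) = n%:R - 2 * (rel_type Pi R i)%:R :> V.
Proof.
case: net => _ [_ _ cardPi _ _]; rewrite sum_signs cardPi /rel_type.
by congr (_ - 2 * _%:R); apply: eq_card => l; rewrite !inE andbC.
Qed.

Lemma sum_point_signs (V : pzRingType) R i j : i != j ->
  \sum_p (-1) ^+ point_type Pi R p i * (-1) ^+ point_type Pi R p j =
  (n%:R - 2 * (rel_type Pi R i)%:R) * (n%:R - 2 * (rel_type Pi R j)%:R) :> V.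
Proof.
move=> neq_ij; under eq_bigr do rewrite !point_typeE.
rewrite (sum_line_pairs (fun l m => (-1) ^+ (l \in R) * (-1) ^+ (m \in R))) //.
by rewrite -!sum_class_signs big_distrlr.
Qed.
End NetLines.

Lemma double_sum_lt_pairs (V : comPzRingType) k (x : 'I_k -> V) :
  2 * \sum_(i < k) \sum_(j < k | (i < j)%N) x i * x j =
  (\sum_(i < k) x i) ^+ 2 - \sum_(i < k) x i ^+ 2.
Proof.
have split_row i : \sum_(j < k) x i * x j =
    x i ^+ 2 + \sum_(j < k | (i < j)%N) x i * x j + \sum_(j < k | (j < i)%N) x i * x j.
  rewrite (bigD1 i) //= (bigID (fun j : 'I_k => (i < j)%N)) /= expr2 addrA.
  congr (_ + _ + _); apply: eq_bigl => j; rewrite -val_eqE /=.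
    by case: ltngtP.
  by case: ltngtP.
have lower : \sum_(i < k) \sum_(j < k | (j < i)%N) x i * x j =
             \sum_(i < k) \sum_(j < k | (i < j)%N) x i * x j.
  rewrite (exchange_big_dep predT) //=; apply: eq_bigr => i _.
  by apply: eq_bigr => j _; rewrite mulrC.
rewrite expr2 big_distrlr /= (eq_bigr _ (fun i _ => split_row i)) !big_split /= lower.
ring.
Qed.

Lemma const_indicator_even6 (c : 'I_6 -> bool) : ~~ odd #|[set i | c i]| ->
  (([forall i, ~~ c i] + [forall i, c i])%N%:R : rat) =
  (1 + \sum_(i < 6) \sum_(j < 6 | (i < j)%N) (-1) ^+ c i * (-1) ^+ c j) / 16.
Proof.
set w := #|[set i | c i]| => even_w.
have w_le6 : (w <= 6)%N by rewrite -[X in (_ <= X)%N](card_ord 6) max_card.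
have all_false : [forall i, ~~ c i] = (w == 0)%N.
  rewrite cards_eq0; apply/forallP/eqP => [nc|/setP c0 i].
    by apply/setP => i; rewrite !inE (negbTE (nc i)).
  by move: (c0 i); rewrite !inE => ->.
have all_true : [forall i, c i] = (w == 6)%N.
  have -> : (w == 6)%N = ([set i | c i] == [set: 'I_6]).
    by rewrite eqEcard subsetT cardsT card_ord eqn_leq w_le6.
  apply/forallP/eqP => [ac|/setP cT i].
    by apply/setP => i; rewrite !inE ac.
  by move: (cT i); rewrite !inE.
have signs : \sum_(i < 6) (-1) ^+ c i = 6 - 2 * w%:R :> rat.
  by rewrite (sum_signs _ 'I_6) card_ord.
have squares : \sum_(i < 6) ((-1) ^+ c i) ^+ 2 = 6 :> rat.
  by under eq_bigr do rewrite sqrr_sign; rewrite sumr_const card_ord.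
(* For even w <= 6 both sides equal (w - 2)(w - 4) / 8. *)
have := @double_sum_lt_pairs rat 6 (fun i => (-1) ^+ c i).
rewrite signs squares all_false all_true; move: (\sum_(i < 6) _) => S.
clearbody w; clear all_false all_true signs squares; move: w_le6 even_w.
by case: w => [|[|[|[|[|[|[|w]]]]]]] //= _ _ pairs; lra.
Qed.

Lemma odd_card_addb (T : finType) (a b : pred T) :
  odd #|[set x | a x (+) b x]| = odd #|[set x | a x]| (+) odd #|[set x | b x]|.
Proof.
have card_sum (c : pred T) : #|[set x | c x]| = (\sum_x c x)%N.
  by rewrite -sum1dep_card big_mkcond; apply: eq_bigr => x _; case: (c x).
rewrite !card_sum -oddD -big_split /=.
rewrite [in RHS](eq_bigr (fun x => (a x (+) b x) + 2 * (a x && b x))%N); last first.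
  by move=> x _; case: (a x); case: (b x).
by rewrite big_split -big_distrr /= oddD oddM addbF.
Qed.

Lemma eq_or_bcompl_indicator6 (a b : {ffun 'I_6 -> bool}) :
    ~~ odd #|[set i | a i]| -> ~~ odd #|[set i | b i]| ->
  (((a == b) + (a == bcompl b))%N%:R : rat) =
  (1 + \sum_(i < 6) \sum_(j < 6 | (i < j)%N)
         (-1) ^+ (b i + b j)%N * ((-1) ^+ a i * (-1) ^+ a j)) / 16.
Proof.
move=> even_a even_b.
have even_ab : ~~ odd #|[set i | a i (+) b i]| by rewrite odd_card_addb (negbTE even_a).
have eq_ab : (a == b) = [forall i, ~~ (a i (+) b i)].
  by apply/eqP/forallP => [-> i|ab]; [rewrite addbb | apply/ffunP => i; apply/eqP; rewrite -negb_add].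
have eq_abc : (a == bcompl b) = [forall i, a i (+) b i].
  apply/eqP/forallP => [-> i|ab]; first by rewrite ffunE addNb addbb.
  by apply/ffunP => i; rewrite ffunE; move: (ab i); case: (a i); case: (b i).
rewrite eq_ab eq_abc (const_indicator_even6 _ even_ab); congr ((1 + _) / 16).
apply: eq_bigr => i _; apply: eq_bigr => j _.
by rewrite !signr_addb exprD; ring.
Qed.

Theorem mainTheorem1 (n : nat) (P : finType) (L : {set {set P}})
    (Pi : 'I_6 -> {set {set P}}) (R : {set {set P}})
    (b : {ffun 'I_6 -> bool}) :
  ~~ odd n ->
  @is_net 6 n P L Pi ->
  is_relation L R ->
  ~~ odd #|[set i | b i]| ->
  let g := fun i : 'I_6 => (n%:R / 2 - (rel_type Pi R i)%:R : rat) in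
  ((t_count Pi R b + t_count Pi R (bcompl b))%N%:R : rat) =
    (n ^ 2)%N%:R / 16 +
    (1 / 4) * \sum_(i < 6) \sum_(j < 6 | (i < j)%N)
                 (-1) ^+ (b i + b j)%N * g i * g j.
Proof.
move=> _ net [RL even_R] even_b g.
have even_type p : ~~ odd #|[set i | point_type Pi R p i]|.
  by rewrite (card_point_type net p RL) even_R.
have t_countE c : (t_count Pi R c)%:R = \sum_p (point_type Pi R p == c)%:R :> rat.
  by rewrite /t_count -sum1dep_card natr_sum big_mkcond; apply: eq_bigr => p _; case: eqP.
rewrite natrD !t_countE -big_split /=.
under eq_bigr => p _ do rewrite -natrD (eq_or_bcompl_indicator6 _ _ (even_type p) even_b).
have [[cardP _ _ _] _] := net.
have card_all : #|xpredT : pred P| = (n ^ 2)%N by rewrite -cardP; apply: eq_card.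
rewrite -mulr_suml big_split /= sumr_const card_all mulrDl exchange_big /=.
congr (_ + _).
rewrite mulr_suml mulr_sumr; apply: eq_bigr => i _.
rewrite exchange_big mulr_suml mulr_sumr; apply: eq_bigr => j lt_ij /=.
have neq_ij : i != j by rewrite -val_eqE neq_ltn lt_ij.
by rewrite -mulr_sumr (sum_point_signs net) // /g; field.
Qed.
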